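(* Let $p\ge2$, $\theta>1$, $a>0$ and $\lambda>0$, and write $\phi_p(t)=|t|^{p-2}t$. Let $h\in C^1[0,a]$ be such that $r^{\theta-1}\phi_p(h')\in C^1(0,a)$ and \[ (r^{\theta-1}\phi_p(h'))'+\lambda r^{\theta-1}\phi_p(h)=0\quad\text{in }(0,a). \] Then: (1) $h'(0)=0$; (2) $r^{\theta-1}\phi_p(h')\in C^1[0,a)$; (3) $(r^{\theta-1}\phi_p(h'))'(0)=0$. *)

From Stdlib Require Import Reals Lra.
From Coquelicot Require Import Coquelicot.
Open Scope R_scope.

(* Real power x^y for x >= 0, with the usual convention 0^y = 0 for y <> 0
   and 0^0 = 1 (Stdlib's Rpower 0 y is 1, which is wrong for our purpose). *)
Definition rpow (x y : R) : R :=
  if Rle_dec x 0 then (if Req_EM_T y 0 then 1 else 0) else Rpower x y.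

(* phi_p(t) = |t|^(p-2) t.  At t = 0 the product is 0 whatever the power. *)
Definition phi (p t : R) : R := rpow (Rabs t) (p - 2) * t.

Definition C1_closed (h : R -> R) (a : R) (dh : R -> R) : Prop :=
  (forall r, 0 < r < a -> is_derive h r (dh r)) /\
  filterlim (fun x => (h x - h 0) / (x - 0)) (at_right 0) (locally (dh 0)) /\
  filterlim (fun x => (h x - h a) / (x - a)) (at_left a) (locally (dh a)) /\
  (forall r, 0 <= r <= a ->
     filterlim dh (within (fun x => 0 <= x <= a) (locally r)) (locally (dh r))).

Definition C1_open (f : R -> R) (a : R) : Prop :=
  forall r, 0 < r < a ->
    ex_derive f r /\ filterlim (Derive f) (locally r) (locally (Derive f r)).

Definition C1_left_closed (f : R -> R) (a : R) (df : R -> R) : Prop :=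
  (forall r, 0 < r < a -> is_derive f r (df r)) /\
  filterlim (fun x => (f x - f 0) / (x - 0)) (at_right 0) (locally (df 0)) /\
  (forall r, 0 <= r < a ->
     filterlim df (within (fun x => 0 <= x < a) (locally r)) (locally (df r))).

From Stdlib Require Import Reals Lra.
From Coquelicot Require Import Coquelicot.
Open Scope R_scope.

(* Let w = r^(theta-1) phi_p(h'), so that w' = -lambda r^(theta-1) phi_p(h) on (0,a).
   Near 0, h is bounded, which gives |w'(s)| <= B s^(theta-1) with
   B = |lambda| |phi_p(|h(0)|+1)|; and h' is bounded, which gives w(r) -> 0 as r -> 0+.
   The mean value theorem on [y, r] with y -> 0+ then yields |w(r)| <= B r^(theta-1) r,
   i.e. |phi_p(h'(r))| <= B r, so h'(0) = 0 by continuity of h'.  The same two bounds show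
   w(r)/r -> 0 and w'(r) -> 0 as r -> 0+, so w' extended by 0 at 0 makes w C^1 on [0,a). *)

Lemma rpow_ge0 (x e : R) : 0 <= rpow x e.
Proof.
  unfold rpow. destruct (Rle_dec x 0).
  - destruct (Req_EM_T e 0); lra.
  - left. apply exp_pos.
Qed.

Lemma rpow_gt0 (x e : R) : 0 < x -> 0 < rpow x e.
Proof.
  intros Hx. unfold rpow. destruct (Rle_dec x 0); [lra|]. apply exp_pos.
Qed.

Lemma rpow_nonpos (x e : R) : x <= 0 -> e <> 0 -> rpow x e = 0.
Proof.
  intros Hx He. unfold rpow. destruct (Rle_dec x 0); [|lra].
  destruct (Req_EM_T e 0); [contradiction|reflexivity].
Qed.

Lemma rpow_le_l (x y e : R) : 0 <= e -> 0 <= x <= y -> rpow x e <= rpow y e.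
Proof.
  intros He Hxy. unfold rpow.
  destruct (Rle_dec y 0); destruct (Rle_dec x 0); try lra.
  - destruct (Req_EM_T e 0) as [->|]; [rewrite Rpower_O; lra|left; apply exp_pos].
  - apply Rle_Rpower_l; lra.
Qed.

Lemma rpow_continuous_0 (e : R) : 0 < e -> filterlim (fun x => rpow x e) (locally 0) (locally 0).
Proof.
  intros He. apply filterlim_locally. intros eps.
  exists (mkposreal _ (exp_pos (ln eps / e))). intros x Hx.
  change (Rabs (x - 0) < exp (ln eps / e)) in Hx.
  change (Rabs (rpow x e - 0) < eps).
  rewrite Rminus_0_r in Hx |- *.
  destruct (Rle_or_lt x 0) as [Hx0|Hx0].
  - rewrite rpow_nonpos, Rabs_R0 by lra. apply cond_pos.
  - rewrite Rabs_pos_eq in Hx by lra. rewrite Rabs_pos_eq by apply rpow_ge0.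
    unfold rpow. destruct (Rle_dec x 0); [lra|]. unfold Rpower.
    rewrite <- (exp_ln eps) by apply cond_pos. apply exp_increasing.
    assert (Hln : ln x < ln eps / e)
      by (rewrite <- (ln_exp (ln eps / e)); apply ln_increasing; lra).
    apply Rmult_lt_compat_l with (r := e) in Hln; [|lra].
    replace (e * (ln eps / e)) with (ln eps) in Hln by (field; lra). exact Hln.
Qed.

Lemma Rabs_phi (p t : R) : Rabs (phi p t) = rpow (Rabs t) (p - 2) * Rabs t.
Proof.
  unfold phi. rewrite Rabs_mult, (Rabs_pos_eq (rpow _ _)) by apply rpow_ge0. reflexivity.
Qed.

Lemma Rabs_phi_le (p s t : R) : 2 <= p -> Rabs s <= Rabs t -> Rabs (phi p s) <= Rabs (phi p t).
Proof.
  intros Hp Hst. rewrite !Rabs_phi.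
  apply Rmult_le_compat; try apply rpow_ge0; try apply Rabs_pos; try exact Hst.
  apply rpow_le_l; [lra|]. split; [apply Rabs_pos|exact Hst].
Qed.

Lemma Rabs_phi_gt0 (p t : R) : t <> 0 -> 0 < Rabs (phi p t).
Proof.
  intros Ht. rewrite Rabs_phi.
  apply Rmult_lt_0_compat; [apply rpow_gt0|]; apply Rabs_pos_lt, Ht.
Qed.

Lemma at_right_iff (x : R) (P : R -> Prop) :
  at_right x P <-> exists d, 0 < d /\ forall y, x < y < x + d -> P y.
Proof.
  split.
  - intros [d Hd]. exists d. split; [apply cond_pos|]. intros y Hy. apply Hd; [|lra].
    change (Rabs (y - x) < d). rewrite Rabs_pos_eq; lra.
  - intros [d [Hd HP]]. exists (mkposreal d Hd). intros y Hy Hxy. apply HP.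
    change (Rabs (y - x) < d) in Hy. rewrite Rabs_pos_eq in Hy; lra.
Qed.

Lemma at_right_interval (x z : R) : x < z -> at_right x (fun y => x < y < z).
Proof.
  intros Hxz. apply at_right_iff. exists (z - x). split; [lra|]. intros y Hy; lra.
Qed.

Lemma at_right_le_within (D : R -> Prop) (x z : R) :
  x < z -> (forall y, x < y < z -> D y) -> filter_le (at_right x) (within D (locally x)).
Proof.
  intros Hxz HD P [d Hd]. apply at_right_iff.
  exists (Rmin d (z - x)). split; [apply Rmin_pos; [apply cond_pos|lra]|].
  intros y Hy. pose proof (Rmin_l d (z - x)). pose proof (Rmin_r d (z - x)).
  apply Hd; [|apply HD; lra]. change (Rabs (y - x) < d). rewrite Rabs_pos_eq; lra.
Qed.

Lemma filterlim_sub_at_right (x : R) : filterlim (fun y => y - x) (at_right x) (locally 0).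
Proof.
  apply filterlim_locally. intros eps. apply at_right_iff.
  exists eps. split; [apply cond_pos|]. intros y Hy.
  change (Rabs (y - x - 0) < eps). rewrite Rabs_pos_eq; lra.
Qed.

Lemma filterlim_eventually_bounded {T : Type} {F : (T -> Prop) -> Prop} {FF : Filter F}
    (f : T -> R) (l : R) :
  filterlim f F (locally l) -> F (fun x => Rabs (f x) <= Rabs l + 1).
Proof.
  intros Hf. apply (filter_imp (fun x => ball l 1 (f x))).
  - intros x Hx. change (Rabs (f x - l) < 1) in Hx.
    pose proof (Rabs_triang_inv (f x) l). lra.
  - exact (proj1 (filterlim_locally f l) Hf (mkposreal 1 Rlt_0_1)).
Qed.

Lemma filterlim_locally_Rabs_le {T : Type} {F : (T -> Prop) -> Prop} {FF : Filter F}
    (f g : T -> R) (l c : R) :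
  F (fun x => Rabs (f x - l) <= c * g x) -> filterlim g F (locally 0) ->
  filterlim f F (locally l).
Proof.
  intros Hfg Hg. apply filterlim_locally. intros eps.
  assert (Hc : 0 < Rabs c + 1) by (pose proof (Rabs_pos c); lra).
  set (eta := mkposreal _ (Rdiv_lt_0_compat eps _ (cond_pos eps) Hc)).
  apply (filter_imp (fun x => Rabs (f x - l) <= c * g x /\ ball 0 eta (g x))).
  - intros x [Hfx Hgx]. change (Rabs (g x - 0) < eps / (Rabs c + 1)) in Hgx.
    change (Rabs (f x - l) < eps). rewrite Rminus_0_r in Hgx.
    assert (Hcg : c * g x <= Rabs c * Rabs (g x)) by (rewrite <- Rabs_mult; apply Rle_abs).
    assert (Rabs c * Rabs (g x) < eps).
    { apply Rle_lt_trans with ((Rabs c + 1) * Rabs (g x)); [pose proof (Rabs_pos (g x)); lra|].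
      apply Rmult_lt_compat_l with (r := Rabs c + 1) in Hgx; [|exact Hc].
      replace ((Rabs c + 1) * (eps / (Rabs c + 1))) with (pos eps) in Hgx by (field; lra).
      exact Hgx. }
    lra.
  - apply filter_and; [exact Hfg|]. exact (proj1 (filterlim_locally g 0) Hg eta).
Qed.

Lemma right_derivative_continuous (f : R -> R) (x l : R) :
  filterlim (fun y => (f y - f x) / (y - x)) (at_right x) (locally l) ->
  filterlim f (at_right x) (locally (f x)).
Proof.
  intros Hq. apply filterlim_locally_Rabs_le with (g := fun y => y - x) (c := Rabs l + 1).
  - apply (filter_imp (fun y => x < y < x + 1 /\ Rabs ((f y - f x) / (y - x)) <= Rabs l + 1)).
    + intros y [Hy Hqy].
      replace (f y - f x) with ((f y - f x) / (y - x) * (y - x)) by (field; lra).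
      rewrite Rabs_mult, (Rabs_pos_eq (y - x)) by lra.
      apply Rmult_le_compat_r; lra.
    + apply filter_and; [apply at_right_interval; lra|exact (filterlim_eventually_bounded _ _ Hq)].
  - apply filterlim_sub_at_right.
Qed.

Lemma Rabs_sub_le_of_Derive_le (f : R -> R) (x l r M : R) :
  x < r ->
  filterlim f (at_right x) (locally l) ->
  (forall s, x < s <= r -> ex_derive f s) ->
  (forall s, x < s <= r -> Rabs (Derive f s) <= M) ->
  Rabs (f r - l) <= M * (r - x).
Proof.
  intros Hxr Hfl Hder Hbound.
  assert (HM : 0 <= M)
    by (apply Rle_trans with (Rabs (Derive f r)); [apply Rabs_pos|apply Hbound; lra]).
  apply Rle_plus_epsilon. intros eps Heps.
  destruct (proj1 (at_right_iff _ _)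
              (proj1 (filterlim_locally f l) Hfl (mkposreal eps Heps))) as [d [Hd Hnear]].
  set (y := x + Rmin d (r - x) / 2).
  assert (Hy : x < y < r /\ y < x + d).
  { pose proof (Rmin_l d (r - x)). pose proof (Rmin_r d (r - x)).
    pose proof (Rmin_pos d (r - x) Hd ltac:(lra)). unfold y. lra. }
  assert (Hfy : Rabs (f y - l) < eps) by exact (Hnear y ltac:(lra)).
  destruct (MVT_gen f y r (Derive f)) as [c [Hc Hmvt]].
  - rewrite Rmin_left, Rmax_right by lra. intros s Hs.
    apply Derive_correct, Hder. lra.
  - rewrite Rmin_left, Rmax_right by lra. intros s Hs.
    apply continuity_pt_filterlim.
    apply (@ex_derive_continuous R_AbsRing R_NormedModule), Hder. lra.
  - rewrite Rmin_left, Rmax_right in Hc by lra.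
    assert (Hchord : Rabs (f r - f y) <= M * (r - y)).
    { rewrite Hmvt, Rabs_mult, (Rabs_pos_eq (r - y)) by lra.
      apply Rmult_le_compat_r; [lra|]. apply Hbound. lra. }
    pose proof (Rabs_triang (f r - f y) (f y - l)).
    replace (f r - f y + (f y - l)) with (f r - l) in * by ring.
    nra.
Qed.

Definition flux (p e : R) (g : R -> R) (r : R) : R := rpow r e * phi p (g r).

Definition Derive_pos (f : R -> R) (x : R) : R := if Rle_dec x 0 then 0 else Derive f x.

Lemma Derive_pos_nonpos (f : R -> R) (x : R) : x <= 0 -> Derive_pos f x = 0.
Proof. intros Hx. unfold Derive_pos. destruct (Rle_dec x 0); [reflexivity|lra]. Qed.

Lemma Derive_pos_pos (f : R -> R) (x : R) : 0 < x -> Derive_pos f x = Derive f x.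
Proof. intros Hx. unfold Derive_pos. destruct (Rle_dec x 0); [lra|reflexivity]. Qed.

Section FluxNearZero.

Variables (p e a lambda : R) (h dh : R -> R).
Hypothesis Hp : 2 <= p.
Hypothesis He : 0 < e.
Hypothesis Ha : 0 < a.
Hypothesis Hh0 : filterlim h (at_right 0) (locally (h 0)).
Hypothesis Hdh0 : filterlim dh (at_right 0) (locally (dh 0)).
Hypothesis Hw : C1_open (flux p e dh) a.
Hypothesis Hode : forall r, 0 < r < a ->
  Derive (flux p e dh) r + lambda * rpow r e * phi p (h r) = 0.

Let w := flux p e dh.
Let B := Rabs lambda * Rabs (phi p (Rabs (h 0) + 1)).

Let B_ge0 : 0 <= B.
Proof. apply Rmult_le_pos; apply Rabs_pos. Qed.

Lemma Derive_flux_le : at_right 0 (fun s => Rabs (Derive w s) <= B * rpow s e).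
Proof.
  apply (filter_imp (fun s => 0 < s < a /\ Rabs (h s) <= Rabs (h 0) + 1)).
  - intros s [Hs Hhs].
    replace (Derive w s) with (- (lambda * rpow s e * phi p (h s)))
      by (unfold w; pose proof (Hode s Hs); lra).
    rewrite Rabs_Ropp, !Rabs_mult, (Rabs_pos_eq (rpow s e)) by apply rpow_ge0.
    assert (Hphi : Rabs (phi p (h s)) <= Rabs (phi p (Rabs (h 0) + 1))).
    { apply Rabs_phi_le; [exact Hp|]. rewrite (Rabs_pos_eq (_ + 1)); [exact Hhs|].
      pose proof (Rabs_pos (h 0)); lra. }
    unfold B. replace (Rabs lambda * Rabs (phi p (Rabs (h 0) + 1)) * rpow s e)
      with (Rabs lambda * rpow s e * Rabs (phi p (Rabs (h 0) + 1))) by ring.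
    apply Rmult_le_compat_l; [apply Rmult_le_pos; [apply Rabs_pos|apply rpow_ge0]|exact Hphi].
  - apply filter_and; [apply at_right_interval, Ha|exact (filterlim_eventually_bounded _ _ Hh0)].
Qed.

Lemma filterlim_flux_0 : filterlim w (at_right 0) (locally 0).
Proof.
  apply filterlim_locally_Rabs_le
    with (g := fun r => rpow r e) (c := Rabs (phi p (Rabs (dh 0) + 1))).
  - apply (filter_imp (fun r => Rabs (dh r) <= Rabs (dh 0) + 1)).
    + intros r Hr. unfold w, flux. rewrite Rminus_0_r, Rabs_mult, Rabs_pos_eq by apply rpow_ge0.
      rewrite Rmult_comm. apply Rmult_le_compat_r; [apply rpow_ge0|].
      apply Rabs_phi_le; [exact Hp|]. rewrite (Rabs_pos_eq (_ + 1)); [exact Hr|].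
      pose proof (Rabs_pos (dh 0)); lra.
    + exact (filterlim_eventually_bounded _ _ Hdh0).
  - exact (filterlim_filter_le_1 _ (filter_le_within _) (rpow_continuous_0 e He)).
Qed.

Lemma flux_le : at_right 0 (fun r => Rabs (w r) <= B * rpow r e * r).
Proof.
  destruct (proj1 (at_right_iff _ _) (filter_and _ _ (at_right_interval 0 a Ha) Derive_flux_le))
    as [d [Hd Hnear]].
  apply at_right_iff. exists d. split; [exact Hd|]. intros r Hr.
  replace (w r) with (w r - 0) by ring.
  replace (B * rpow r e * r) with (B * rpow r e * (r - 0)) by ring.
  apply Rabs_sub_le_of_Derive_le; [lra|exact filterlim_flux_0| |].
  - intros s Hs. apply Hw, Hnear. lra.
  - intros s Hs. apply Rle_trans with (B * rpow s e); [apply Hnear; lra|].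
    apply Rmult_le_compat_l; [exact B_ge0|]. apply rpow_le_l; lra.
Qed.

Lemma phi_dh_le : at_right 0 (fun r => Rabs (phi p (dh r)) <= B * r).
Proof.
  apply (filter_imp (fun r => 0 < r < a /\ Rabs (w r) <= B * rpow r e * r)).
  - intros r [Hr Hwr]. unfold w, flux in Hwr.
    rewrite Rabs_mult, (Rabs_pos_eq (rpow r e)) in Hwr by apply rpow_ge0.
    pose proof (rpow_gt0 r e ltac:(lra)).
    apply Rmult_le_reg_l with (rpow r e); [assumption|]. lra.
  - apply filter_and; [apply at_right_interval, Ha|exact flux_le].
Qed.

Lemma dh0_eq0 : dh 0 = 0.
Proof.
  destruct (Req_dec (dh 0) 0) as [E|Hne]; [exact E|exfalso].
  assert (Hc : 0 < Rabs (dh 0) / 2) by (pose proof (Rabs_pos_lt _ Hne); lra).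
  set (c := Rabs (dh 0) / 2) in Hc.
  assert (Hlow : at_right 0 (fun r => Rabs (phi p c) <= B * r)).
  { apply (filter_imp (fun r => ball (dh 0) c (dh r) /\ Rabs (phi p (dh r)) <= B * r)).
    - intros r [Hr Hphi]. apply Rle_trans with (Rabs (phi p (dh r))); [|exact Hphi].
      apply Rabs_phi_le; [exact Hp|]. change (Rabs (dh r - dh 0) < c) in Hr.
      pose proof (Rabs_triang_inv (dh 0) (dh r)). rewrite <- Rabs_Ropp in Hr.
      replace (- (dh r - dh 0)) with (dh 0 - dh r) in Hr by ring.
      rewrite (Rabs_pos_eq c) by lra. unfold c in *. lra.
    - apply filter_and; [|exact phi_dh_le].
      exact (proj1 (filterlim_locally dh _) Hdh0 (mkposreal c Hc)). }
  assert (Hlim : filterlim (fun r => B * r) (at_right 0) (locally 0)).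
  { apply filterlim_locally_Rabs_le with (g := fun r => r - 0) (c := B);
      [|apply filterlim_sub_at_right].
    apply (filter_imp (fun r => 0 < r < 1)); [|apply at_right_interval; lra].
    intros r Hr. rewrite !Rminus_0_r, Rabs_mult, Rabs_pos_eq, (Rabs_pos_eq r) by lra. lra. }
  assert (Hle : Rbar_le (Rabs (phi p c)) 0).
  { apply (filterlim_le (FF := Proper_StrongProper _ (at_right_proper_filter 0))
             (fun _ => Rabs (phi p c)) (fun r => B * r));
      [exact Hlow|apply filterlim_const|exact Hlim]. }
  simpl in Hle.
  pose proof (Rabs_phi_gt0 p c ltac:(lra)). lra.
Qed.

Lemma Derive_pos_flux_le : locally 0 (fun r => Rabs (Derive_pos w r) <= B * rpow r e).
Proof.
  destruct Derive_flux_le as [d Hd]. exists d. intros r Hr.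
  destruct (Rle_or_lt r 0) as [Hr0|Hr0].
  - rewrite Derive_pos_nonpos, rpow_nonpos, Rabs_R0 by lra. lra.
  - rewrite Derive_pos_pos by exact Hr0. exact (Hd r Hr Hr0).
Qed.

Lemma flux_C1_left_closed : C1_left_closed w a (Derive_pos w).
Proof.
  assert (Hw00 : w 0 = 0) by (unfold w, flux; rewrite rpow_nonpos by lra; ring).
  split; [|split].
  - intros r Hr. rewrite Derive_pos_pos by apply Hr. apply Derive_correct, Hw, Hr.
  - rewrite Derive_pos_nonpos by lra.
    apply filterlim_locally_Rabs_le with (g := fun r => rpow r e) (c := B).
    + apply (filter_imp (fun r => 0 < r < a /\ Rabs (w r) <= B * rpow r e * r)).
      * intros r [Hr Hwr]. rewrite Hw00, !Rminus_0_r, Rabs_div, (Rabs_pos_eq r) by lra.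
        apply Rle_div_l; lra.
      * apply filter_and; [apply at_right_interval, Ha|exact flux_le].
    + exact (filterlim_filter_le_1 _ (filter_le_within _) (rpow_continuous_0 e He)).
  - intros r [Hr0 Hra]. destruct (Rle_lt_or_eq_dec 0 r Hr0) as [Hr|<-];
      apply (filterlim_filter_le_1 _ (filter_le_within _)).
    + rewrite Derive_pos_pos by exact Hr.
      apply filterlim_ext_loc with (Derive w); [|apply Hw; lra].
      exists (mkposreal r Hr). intros y Hy. change (Rabs (y - r) < r) in Hy.
      rewrite Derive_pos_pos; [reflexivity|]. apply Rabs_lt_between' in Hy. lra.
    + rewrite Derive_pos_nonpos by lra.
      apply filterlim_locally_Rabs_le with (g := fun r => rpow r e) (c := B);
        [|exact (rpow_continuous_0 e He)].
      apply (filter_imp (fun r => Rabs (Derive_pos w r) <= B * rpow r e));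
        [|exact Derive_pos_flux_le].
      intros r Hr. rewrite Rminus_0_r. exact Hr.
Qed.

End FluxNearZero.

Theorem mainTheorem15 (p theta a lambda : R) (h dh : R -> R) :
  2 <= p -> 1 < theta -> 0 < a -> 0 < lambda ->
  C1_closed h a dh ->
  C1_open (fun r => rpow r (theta - 1) * phi p (dh r)) a ->
  (forall r, 0 < r < a ->
     Derive (fun s => rpow s (theta - 1) * phi p (dh s)) r
     + lambda * rpow r (theta - 1) * phi p (h r) = 0) ->
  dh 0 = 0 /\
  exists dw : R -> R,
    C1_left_closed (fun r => rpow r (theta - 1) * phi p (dh r)) a dw /\
    dw 0 = 0.
Proof.
  (* The sign of lambda and the regularity of h away from 0 play no role. *)
  intros Hp Htheta Ha _ [_ [Hh_quotient [_ Hdh_cont]]] Hw Hode.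
  assert (He : 0 < theta - 1) by lra.
  assert (Hh0 : filterlim h (at_right 0) (locally (h 0)))
    by exact (right_derivative_continuous h 0 (dh 0) Hh_quotient).
  assert (Hdh0 : filterlim dh (at_right 0) (locally (dh 0))).
  { apply (filterlim_filter_le_1 (F := within (fun x => 0 <= x <= a) (locally 0))).
    - apply (at_right_le_within _ 0 a Ha). intros y Hy. lra.
    - apply Hdh_cont. lra. }
  split.
  - exact (dh0_eq0 p (theta - 1) a lambda h dh Hp He Ha Hh0 Hdh0 Hw Hode).
  - exists (Derive_pos (flux p (theta - 1) dh)). split.
    + exact (flux_C1_left_closed p (theta - 1) a lambda h dh Hp He Ha Hh0 Hdh0 Hw Hode).
    + apply Derive_pos_nonpos, Rle_refl.
Qed.
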